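(* Let $A,B,M,N,c\in\mathbb{R}$ with $B\neq0$, $c\neq0$, $A^2+4Bc>0$, and suppose $K:=-\frac{6(M+N)}{B}>0$. Set $$\varphi_1=-\frac{A+\sqrt{3(A^2+4Bc)}}{2B},\qquad \varphi_2=-\frac{A-\sqrt{3(A^2+4Bc)}}{2B}.$$ Then for every $C_1\in\mathbb{R}$ and either choice of sign, both $$u(x,y,t)=\varphi_1+\frac{\varphi_2-\varphi_1}{1+\exp\!\left(\mp\frac{\varphi_1-\varphi_2}{\sqrt K}(C_1-x-y+ct)\right)}$$ and $$u(x,y,t)=\varphi_1+\frac{\varphi_2-\varphi_1}{1-\exp\!\left(\mp\frac{\varphi_2-\varphi_1}{\sqrt K}(C_1-x-y+ct)\right)}$$ (the latter where the denominator does not vanish) are solutions of $u_t+Auu_x+Bu^2u_x+Mu_{xxx}+Nu_{xyy}=0$.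
   Context: These families correspond to the case where $P(z)=Bz^4+2Az^3-6cz^2-C_2z+C_3$ has two distinct real double roots $\varphi_1,\varphi_2$, i.e. $C_2=\frac{A(A^2+6Bc)}{B^2}$, $C_3=\frac{(A^2+6Bc)^2}{4B^3}$. *)

From Stdlib Require Import Reals.
From Coquelicot Require Import Coquelicot.
Open Scope R_scope.

Definition Dx (u : R -> R -> R -> R) : R -> R -> R -> R :=
  fun x y t => Derive (fun s => u s y t) x.
Definition Dy (u : R -> R -> R -> R) : R -> R -> R -> R :=
  fun x y t => Derive (fun s => u x s t) y.
Definition Dt (u : R -> R -> R -> R) : R -> R -> R -> R :=
  fun x y t => Derive (fun s => u x y s) t.

Definition solves_on (D : R -> R -> R -> Prop) (A B M N : R)
    (u : R -> R -> R -> R) : Prop :=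
  forall x y t, D x y t ->
    ex_derive (fun s => u x y s) t /\
    ex_derive (fun s => u s y t) x /\
    ex_derive (fun s => Dx u s y t) x /\
    ex_derive (fun s => Dx (Dx u) s y t) x /\
    ex_derive (fun s => u x s t) y /\
    ex_derive (fun s => Dy u x s t) y /\
    ex_derive (fun s => Dy (Dy u) s y t) x /\
    Dt u x y t + A * u x y t * Dx u x y t + B * (u x y t) ^ 2 * Dx u x y t
      + M * Dx (Dx (Dx u)) x y t + N * Dx (Dy (Dy u)) x y t = 0.

(** For a travelling wave [u = U (C1 - x - y + c t)] the equation reduces to the
    ODE [c U' - A U U' - B U^2 U' - (M + N) U''' = 0].  Both profiles solve the
    Riccati equation [U' = a (U - phi1) (U - phi2)] with [a = +-1/sqrt K]; writing
    [P] for its right-hand side, [U''' = (2 a P(U) + P'(U)^2) P(U)], so the ODE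
    becomes [P(U)] times a quadratic in [U] whose coefficients vanish because
    [phi1 + phi2 = -A/B], [phi1 phi2 = (A^2 - 3 (A^2 + 4 B c)) / (4 B^2)] and
    [a^2 (M + N) = -B/6]. *)

From Stdlib Require Import Reals Lra.
From Coquelicot Require Import Coquelicot.
(* Imported last, so that [Dx] is [Defs.Dx] rather than [Rderiv.Dx]. *)
From Pilot Require Import Defs.
Open Scope R_scope.

Lemma is_derive_affine_comp_on (V : R -> Prop) (F F' f h : R -> R) (q m s l : R) :
  open V ->
  (forall z, V z -> is_derive F z (F' z)) ->
  (forall r, h r = h s + m * (r - s)) ->
  (forall r, V (h r) -> f r = q * F (h r)) ->
  V (h s) -> l = q * (m * F' (h s)) ->
  is_derive f s l.
Proof.
  intros HV HF Hh Hf Hs ->.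
  assert (Dh : is_derive h s m).
  { apply (is_derive_ext (fun r => h s + m * (r - s))); [intro r; symmetry; apply Hh|].
    auto_derive; [easy | ring]. }
  assert (near_s : locally s (fun r => V (h r)))
    by exact (ex_derive_continuous h s (ex_intro _ m Dh) _ (HV _ Hs)).
  apply (is_derive_ext_loc (fun r => q * F (h r))).
  - apply (filter_imp _ _ (fun r Hr => eq_sym (Hf r Hr)) near_s).
  - apply is_derive_scal, (is_derive_comp F h s (F' (h s)) m); auto.
Qed.

Section TravellingWave.

Variables (A B M N c C1 : R) (V : R -> Prop) (U U1 U2 U3 : R -> R).
Hypotheses (HV : open V)
  (DU : forall z, V z -> is_derive U z (U1 z))
  (DU1 : forall z, V z -> is_derive U1 z (U2 z))
  (DU2 : forall z, V z -> is_derive U2 z (U3 z)).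

Let u x y t := U (C1 - x - y + c * t).

Lemma is_derive_wave_x (F F' f : R -> R) (q y t : R) :
  (forall z, V z -> is_derive F z (F' z)) ->
  (forall r, V (C1 - r - y + c * t) -> f r = q * F (C1 - r - y + c * t)) ->
  forall x l, V (C1 - x - y + c * t) -> l = - q * F' (C1 - x - y + c * t) ->
  is_derive f x l.
Proof.
  intros HF Hf x l Hx ->.
  apply (is_derive_affine_comp_on V F F' f (fun r => C1 - r - y + c * t) q (-1));
    auto; intros; ring.
Qed.

Lemma is_derive_wave_y (F F' f : R -> R) (q x t : R) :
  (forall z, V z -> is_derive F z (F' z)) ->
  (forall r, V (C1 - x - r + c * t) -> f r = q * F (C1 - x - r + c * t)) ->
  forall y l, V (C1 - x - y + c * t) -> l = - q * F' (C1 - x - y + c * t) ->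
  is_derive f y l.
Proof.
  intros HF Hf y l Hy ->.
  apply (is_derive_affine_comp_on V F F' f (fun r => C1 - x - r + c * t) q (-1));
    auto; intros; ring.
Qed.

Lemma solves_on_travelling_wave :
  (forall z, V z -> c * U1 z - A * U z * U1 z - B * U z ^ 2 * U1 z - (M + N) * U3 z = 0) ->
  solves_on (fun x y t => V (C1 - x - y + c * t)) A B M N u.
Proof.
  intros ode.
  assert (ux : forall x y t, V (C1 - x - y + c * t) ->
      is_derive (fun s => u s y t) x (- U1 (C1 - x - y + c * t))).
  { intros x y t H; apply (is_derive_wave_x U U1 _ 1 y t); auto; intros; unfold u; ring. }
  assert (uy : forall x y t, V (C1 - x - y + c * t) ->
      is_derive (fun s => u x s t) y (- U1 (C1 - x - y + c * t))).
  { intros x y t H; apply (is_derive_wave_y U U1 _ 1 x t); auto; intros; unfold u; ring. }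
  assert (uxx : forall x y t, V (C1 - x - y + c * t) ->
      is_derive (fun s => Dx u s y t) x (U2 (C1 - x - y + c * t))).
  { intros x y t H; apply (is_derive_wave_x U1 U2 _ (-1) y t); auto; [intros r Hr|ring].
    transitivity (- U1 (C1 - r - y + c * t)); [apply is_derive_unique, ux, Hr | ring]. }
  assert (uyy : forall x y t, V (C1 - x - y + c * t) ->
      is_derive (fun s => Dy u x s t) y (U2 (C1 - x - y + c * t))).
  { intros x y t H; apply (is_derive_wave_y U1 U2 _ (-1) x t); auto; [intros r Hr|ring].
    transitivity (- U1 (C1 - x - r + c * t)); [apply is_derive_unique, uy, Hr | ring]. }
  assert (uxxx : forall x y t, V (C1 - x - y + c * t) ->
      is_derive (fun s => Dx (Dx u) s y t) x (- U3 (C1 - x - y + c * t))).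
  { intros x y t H; apply (is_derive_wave_x U2 U3 _ 1 y t); auto; [intros r Hr|ring].
    transitivity (U2 (C1 - r - y + c * t)); [apply is_derive_unique, uxx, Hr | ring]. }
  assert (uxyy : forall x y t, V (C1 - x - y + c * t) ->
      is_derive (fun s => Dy (Dy u) s y t) x (- U3 (C1 - x - y + c * t))).
  { intros x y t H; apply (is_derive_wave_x U2 U3 _ 1 y t); auto; [intros r Hr|ring].
    transitivity (U2 (C1 - r - y + c * t)); [apply is_derive_unique, uyy, Hr | ring]. }
  assert (ut : forall x y t, V (C1 - x - y + c * t) ->
      is_derive (fun s => u x y s) t (c * U1 (C1 - x - y + c * t))).
  { intros x y t H.
    apply (is_derive_affine_comp_on V U U1 _ (fun s => C1 - x - y + c * s) 1 c);
      auto; intros; unfold u; ring. }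
  intros x y t H; simpl in H.
  do 7 (split; [eexists; eauto|]).
  set (z := C1 - x - y + c * t) in H.
  replace (Dt u x y t) with (c * U1 z) by (symmetry; apply is_derive_unique, ut, H).
  replace (Dx u x y t) with (- U1 z) by (symmetry; apply is_derive_unique, ux, H).
  replace (Dx (Dx (Dx u)) x y t) with (- U3 z)
    by (symmetry; apply is_derive_unique, uxxx, H).
  replace (Dx (Dy (Dy u)) x y t) with (- U3 z)
    by (symmetry; apply is_derive_unique, uxyy, H).
  rewrite <- (ode _ H); unfold u; fold z; ring.
Qed.

End TravellingWave.

Lemma solves_on_riccati_wave (A B M N c C1 a p1 p2 : R) (V : R -> Prop) (U : R -> R) :
  open V ->
  (forall z, V z -> is_derive U z (a * (U z - p1) * (U z - p2))) ->
  (forall w, c - A * w - B * w ^ 2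
     - (M + N) * (2 * a * (a * (w - p1) * (w - p2)) + (a * (2 * w - p1 - p2)) ^ 2) = 0) ->
  solves_on (fun x y t => V (C1 - x - y + c * t)) A B M N
    (fun x y t => U (C1 - x - y + c * t)).
Proof.
  intros HV DU poly.
  set (P := fun w => a * (w - p1) * (w - p2)).
  set (P' := fun w => a * (2 * w - p1 - p2)).
  assert (comp : forall G G' : R -> R, (forall w, is_derive G w (G' w)) ->
            forall z, V z -> is_derive (fun z => G (U z)) z (G' (U z) * P (U z))).
  { intros G G' DG z Hz. rewrite Rmult_comm.
    apply (is_derive_comp G U z (G' (U z)) (P (U z))); auto. }
  apply (solves_on_travelling_wave A B M N c C1 V U (fun z => P (U z))
           (fun z => P' (U z) * P (U z))
           (fun z => (2 * a * P (U z) + P' (U z) ^ 2) * P (U z))).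
  - exact HV.
  - exact DU.
  - apply (comp P P'). intro w; unfold P, P'; auto_derive; auto; ring.
  - apply (comp (fun w => P' w * P w) (fun w => 2 * a * P w + P' w ^ 2)).
    intro w; unfold P, P'; auto_derive; auto; ring.
  - intros z _. rewrite <- (Rmult_0_r (P (U z))), <- (poly (U z)). unfold P, P'; ring.
Qed.

Lemma riccati_wave_identity (A B M N c s w : R) :
  B <> 0 -> 0 <= 3 * (A ^ 2 + 4 * B * c) -> - (6 * (M + N)) / B > 0 -> s ^ 2 = 1 ->
  let K := - (6 * (M + N)) / B in
  let r := sqrt (3 * (A ^ 2 + 4 * B * c)) in
  let a := s / sqrt K in
  let p1 := - (A + r) / (2 * B) in
  let p2 := - (A - r) / (2 * B) in
  c - A * w - B * w ^ 2
    - (M + N) * (2 * a * (a * (w - p1) * (w - p2)) + (a * (2 * w - p1 - p2)) ^ 2) = 0.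
Proof.
  intros HB Hdisc HK Hs K r a p1 p2.
  assert (Hr : r ^ 2 = 3 * (A ^ 2 + 4 * B * c)) by (apply pow2_sqrt, Hdisc).
  assert (Ha : a ^ 2 * K = 1).
  { assert (HsK : sqrt K <> 0) by (apply Rgt_not_eq, sqrt_lt_R0, HK).
    replace (a ^ 2 * K) with (s ^ 2 * (K / sqrt K ^ 2)) by (unfold a; field; exact HsK).
    rewrite pow2_sqrt, Hs by (apply Rlt_le, HK). field. apply Rgt_not_eq, HK. }
  assert (HMN : M + N = - (B * K) / 6) by (unfold K; field; exact HB).
  assert (Hsum : p1 + p2 = - A / B) by (unfold p1, p2; field; exact HB).
  assert (Hprod : p1 * p2 = (A ^ 2 - r ^ 2) / (4 * B ^ 2)) by (unfold p1, p2; field; exact HB).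
  rewrite HMN.
  transitivity (c - A * w - B * w ^ 2
    + (B / 6) * (a ^ 2 * K) * (6 * w ^ 2 - 6 * (p1 + p2) * w + (p1 + p2) ^ 2 + 2 * (p1 * p2))).
  - field.
  - rewrite Ha, Hsum, Hprod, Hr. field. exact HB.
Qed.

Lemma is_derive_kink_profile (p1 p2 k z : R) : p2 - p1 <> 0 ->
  is_derive (fun z => p1 + (p2 - p1) / (1 + exp (k * z))) z
    (k / (p2 - p1) * (p1 + (p2 - p1) / (1 + exp (k * z)) - p1)
       * (p1 + (p2 - p1) / (1 + exp (k * z)) - p2)).
Proof.
  intros Hd. assert (0 < exp (k * z)) by apply exp_pos.
  auto_derive; [lra | field; split; lra].
Qed.

Lemma is_derive_singular_profile (p1 p2 k z : R) : p2 - p1 <> 0 -> 1 - exp (k * z) <> 0 ->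
  is_derive (fun z => p1 + (p2 - p1) / (1 - exp (k * z))) z
    (k / (p2 - p1) * (p1 + (p2 - p1) / (1 - exp (k * z)) - p1)
       * (p1 + (p2 - p1) / (1 - exp (k * z)) - p2)).
Proof.
  intros Hd Hz. auto_derive; [exact Hz | field; split; auto].
Qed.

Lemma open_exp_ne_1 (k : R) : open (fun z => 1 - exp (k * z) <> 0).
Proof.
  apply (open_comp (fun z => 1 - exp (k * z)) (fun v => v <> 0)); [|apply open_neq].
  intros z _. apply (ex_derive_continuous (fun z => 1 - exp (k * z))). auto_derive; auto.
Qed.

Theorem mainTheorem6 (A B M N c C1 eps : R) :
  B <> 0 -> c <> 0 -> A ^ 2 + 4 * B * c > 0 ->
  - (6 * (M + N)) / B > 0 ->
  (eps = 1 \/ eps = -1) ->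
  let K := - (6 * (M + N)) / B in
  let phi1 := - (A + sqrt (3 * (A ^ 2 + 4 * B * c))) / (2 * B) in
  let phi2 := - (A - sqrt (3 * (A ^ 2 + 4 * B * c))) / (2 * B) in
  solves_on (fun _ _ _ => True) A B M N
    (fun x y t => phi1 + (phi2 - phi1) /
       (1 + exp (- eps * ((phi1 - phi2) / sqrt K) * (C1 - x - y + c * t)))) /\
  solves_on
    (fun x y t => 1 - exp (- eps * ((phi2 - phi1) / sqrt K) * (C1 - x - y + c * t)) <> 0)
    A B M N
    (fun x y t => phi1 + (phi2 - phi1) /
       (1 - exp (- eps * ((phi2 - phi1) / sqrt K) * (C1 - x - y + c * t)))).
Proof.
  intros HB _ Hdisc HK Heps K phi1 phi2.
  assert (Hd : phi2 - phi1 <> 0).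
  { replace (phi2 - phi1) with (sqrt (3 * (A ^ 2 + 4 * B * c)) / B)
      by (unfold phi1, phi2; field; exact HB).
    apply Rmult_integral_contrapositive_currified;
      [apply Rgt_not_eq, sqrt_lt_R0; lra | apply Rinv_neq_0_compat, HB]. }
  assert (HsK : sqrt K <> 0) by (apply Rgt_not_eq, sqrt_lt_R0, HK).
  split.
  - set (k := - eps * ((phi1 - phi2) / sqrt K)).
    apply (solves_on_riccati_wave A B M N c C1 (k / (phi2 - phi1)) phi1 phi2 (fun _ => True)
             (fun z => phi1 + (phi2 - phi1) / (1 + exp (k * z)))).
    + exact open_true.
    + intros z _. now apply is_derive_kink_profile.
    + replace (k / (phi2 - phi1)) with (eps / sqrt K) by (unfold k; field; auto).
      intro w; apply riccati_wave_identity; [exact HB | lra | exact HK |].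
      destruct Heps; subst; ring.
  - set (k := - eps * ((phi2 - phi1) / sqrt K)).
    apply (solves_on_riccati_wave A B M N c C1 (k / (phi2 - phi1)) phi1 phi2
             (fun z => 1 - exp (k * z) <> 0)
             (fun z => phi1 + (phi2 - phi1) / (1 - exp (k * z)))).
    + apply open_exp_ne_1.
    + intros z Hz. now apply is_derive_singular_profile.
    + replace (k / (phi2 - phi1)) with (- eps / sqrt K) by (unfold k; field; auto).
      intro w; apply riccati_wave_identity; [exact HB | lra | exact HK |].
      destruct Heps; subst; ring.
Qed.
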